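(* Define primes $p_i$, $i\geq 1$, recursively: $p_1=5$, and for $i>1$, $p_i$ is the smallest prime larger than $p_{i-1}$ that does not divide $|{}^2G_2(3^{p_j})|$ for any $1\leq j<i$. Set $q_i=3^{p_i}$, $R_i={}^2G_2(q_i)$, and for a positive integer $k$ let $P_k=R_1\times\cdots\times R_k$. Then for every $i\geq 1$: (a) $\pi(R_i)\cap\pi(R_j)=\{2,3,7\}$ for all $j\neq i$; (b) $p_i\notin\pi(R_j)$ for all $j$; in particular $5\notin\pi(R_j)$ for all $j$; (c) $\pi(q_i+1)\neq\{2\}$ and $\pi(q_i-1)\neq\{2\}$; $7$ divides one of $q_i-\sqrt{3q_i}+1$, $q_i+\sqrt{3q_i}+1$; and $\pi(q_i+\sqrt{3q_i}+1)\neq\{7\}$ and $\pi(q_i-\sqrt{3q_i}+1)\neq\{7\}$; (d) for every positive integer $k$ and every integer $m>3$ (with $3^m$ such that ${}^2G_2(3^m)$ is defined, i.e. $m$ odd), if $\pi({}^2G_2(3^m))\subseteq\pi(P_k)$, then $m\in\{p_1,\dots,p_k\}$.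
   Context: For a finite group $X$ (or positive integer $n$), $\pi(X)$ (resp. $\pi(n)$) denotes the set of prime divisors of $|X|$ (resp. $n$). ${}^2G_2(q)$, $q=3^\alpha$ with $\alpha$ odd, is the small Ree group, of order $q^3(q-1)(q^3+1)$. *)

From mathcomp Require Import all_boot.
Set Implicit Arguments. Unset Strict Implicit. Unset Printing Implicit Defensive.

Definition ree_order (q : nat) : nat := q ^ 3 * (q - 1) * (q ^ 3 + 1).

(* The search range (l, l + B!+1] is large
   enough: any prime divisor of B!+1 with B = l + prod_j |2G2(3^{p_j})| works. *)
Definition next_p (s : seq nat) : nat :=
  let l := last 5 s in
  let B := l + \prod_(p <- s) ree_order (3 ^ p) in
  head 0 [seq x <- iota l.+1 (B`!.+1)
           | prime x & all (fun p => ~~ (x %| ree_order (3 ^ p))) s].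

(* ree_primes n = [:: p_1; ...; p_{n+1}] *)
Fixpoint ree_primes (n : nat) : seq nat :=
  match n with
  | 0 => [:: 5]
  | n'.+1 => let s := ree_primes n' in rcons s (next_p s)
  end.

(* p_i (1-indexed, i >= 1) *)
Definition reeP (i : nat) : nat := last 5 (ree_primes i.-1).

Definition reeQ (i : nat) : nat := 3 ^ reeP i.

(* sqrt(3 q_i) = 3^{(p_i + 1)/2}, p_i odd *)
Definition reeS (i : nat) : nat := 3 ^ (reeP i).+1./2.

From mathcomp Require Import all_boot zify.
Set Implicit Arguments. Unset Strict Implicit. Unset Printing Implicit Defensive.

(** Everything reduces to the arithmetic of 3^n - 1 and 3^n + 1.  A prime
    r <> 3 dividing |2G2(3^b)| divides 3^b - 1 or 3^(3b) + 1, hence 3^(6b) - 1.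
    Since gcd(3^m - 1, 3^n - 1) = 3^gcd(m,n) - 1, a prime dividing the orders
    for two coprime exponents divides 3^6 - 1 = 2^3 * 7 * 13, and 13 is ruled
    out because 3 has order 3 modulo 13 while 3 does not divide the exponents.
    With Fermat's little theorem the same argument shows that p_i does not
    divide |R_j| for j >= i; for j < i this is the definition of p_i.
    Part (c) is arithmetic modulo 8 and 7, together with the lifting-the-exponent
    lemma: if 3^t divides 7^e - 1 then e >= 3^(t-1), so q +- sqrt(3q) + 1,
    which has the form 3^t c + 1 with c < 3^t, is too small to be a power of 7.
    For (d), an odd prime dividing 3^m - 1 (m odd) and |2G2(3^b)| (b prime)
    divides 3^b - 1 and forces b | m.  So a prime m equals some p_j, and a
    composite m has a divisor p p' with p, p' odd primes for which 3^(pp') - 1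
    has a prime divisor dividing neither 3^p - 1 nor 3^p' - 1 (a case of
    Zsigmondy's theorem, obtained by bounding the non-primitive part of
    (3^(pp') - 1) / (3^p - 1) with lifting the exponent). *)

(** * Geometric sums and lifting the exponent *)

Definition geom (x n : nat) : nat := \sum_(i < n) x ^ i.

Lemma predn_exp_geom x n : (x ^ n).-1 = x.-1 * geom x n.
Proof. exact: predn_exp. Qed.

Lemma geom_gt0 x n : 0 < n -> 0 < geom x n.
Proof. by case: n => // n _; rewrite /geom big_ord_recl expn0 addSn. Qed.

Lemma geom_ge x n : 0 < n -> x ^ n.-1 <= geom x n.
Proof. by case: n => // n _; rewrite /geom big_ord_recr leq_addl. Qed.

Lemma geomM x m n : 1 < x -> geom x (m * n) = geom x m * geom (x ^ m) n.
Proof.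
move=> x_gt1; apply/eqP; rewrite -(eqn_pmul2l (_ : 0 < x.-1)); last by lia.
by rewrite -predn_exp_geom expnM predn_exp_geom predn_exp_geom mulnA.
Qed.

Lemma geom_mod_pred x n : 0 < x -> geom x n = n %[mod x.-1].
Proof.
move=> x_gt0; rewrite /geom -modn_summ.
have x_mod : x %% x.-1 = 1 %% x.-1 by rewrite {1}(_ : x = x.-1 + 1) ?modnDl //; lia.
under eq_bigr => i _ do rewrite -modnXm x_mod modnXm exp1n.
by rewrite modn_summ sum_nat_const card_ord muln1.
Qed.

Lemma dvdn_geom r x n : 0 < x -> r %| x.-1 -> (r %| geom x n) = (r %| n).
Proof.
move=> x_gt0 r_x; rewrite /dvdn -[in LHS](modn_dvdm _ r_x) geom_mod_pred //.
by rewrite modn_dvdm.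
Qed.

Lemma odd_geom x n : odd x -> odd (geom x n) = odd n.
Proof.
move=> x_odd; have x_gt0 := odd_gt0 x_odd.
by apply: negb_inj; rewrite -!dvdn2 dvdn_geom // dvdn2 -oddS prednK.
Qed.

Lemma geom_succ_expansion y n :
  exists w, geom y.+1 n = n + y * 'C(n, 2) + y ^ 2 * w.
Proof.
have binom1 k : exists c, y.+1 ^ k = 1 + k * y + c * y ^ 2.
  elim: k => [|k [c IH]]; first by exists 0; rewrite mul0n.
  by exists (c * y.+1 + k); rewrite expnS IH; nia.
elim: n => [|n [w IH]]; first by exists 0; rewrite /geom big_ord0 bin0n /= !muln0.
have [c yn] := binom1 n.
exists (w + c); rewrite /geom big_ord_recr /= -/(geom _ _) IH yn binS bin1 expnS expn1.
nia.
Qed.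

Lemma logn_geom_prime r x : prime r -> odd r -> 1 < x -> r %| x.-1 ->
  logn r (geom x r) = 1.
Proof.
move=> r_pr r_odd x_gt1 /dvdnP[t xE].
have r_gt1 := prime_gt1 r_pr; have r_gt0 := prime_gt0 r_pr.
have G_gt0 : 0 < geom x r by rewrite geom_gt0.
have [w] := geom_succ_expansion x.-1 r.
rewrite prednK ?(ltnW x_gt1) // xE bin2odd // => GE.
have G_mod : geom x r = r + r ^ 2 * (t * r.-1./2 + t ^ 2 * w).
  by rewrite GE; move: r.-1./2 => h; nia.
have r_G : r %| geom x r by rewrite G_mod dvdn_addr ?dvdn_mulr // expnS dvdn_mulr.
have r2_G : ~~ (r ^ 2 %| geom x r).
  have r_lt_r2 : r < r ^ 2 by rewrite -[X in X < _]expn1 ltn_exp2l.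
  by rewrite G_mod dvdn_addl; [rewrite gtnNdvd | exact: dvdn_mulr].
by move: r_G r2_G; rewrite -{1}(expn1 r) !pfactor_dvdn //; lia.
Qed.

Lemma logn_geom r x n : prime r -> odd r -> 1 < x -> r %| x.-1 -> 0 < n ->
  logn r (geom x n) = logn r n.
Proof.
move=> r_pr r_odd x_gt1 r_x n_gt0; have r_gt0 := prime_gt0 r_pr.
have [k r_k nE] := pfactor_coprime r_pr n_gt0.
have k_gt0 : 0 < k by move: n_gt0; rewrite nE muln_gt0 => /andP[].
rewrite nE lognM ?expn_gt0 ?r_gt0 // pfactorK // (logn_coprime r_k) add0n.
elim: (logn r n) x x_gt1 r_x => [|a IH] x x_gt1 r_x.
  rewrite muln1 logn_coprime // prime_coprime //.
  by rewrite dvdn_geom ?(ltnW x_gt1) // -prime_coprime.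
have kra_gt0 : 0 < k * r ^ a by rewrite muln_gt0 k_gt0 expn_gt0 r_gt0.
have y_gt1 : 1 < x ^ (k * r ^ a) by rewrite -(exp1n (k * r ^ a)) ltn_exp2r.
have r_y : r %| (x ^ (k * r ^ a)).-1 := dvdn_trans r_x (dvdn_pred_predX _ _).
rewrite expnSr mulnA geomM // lognM ?geom_gt0 //.
by rewrite IH // logn_geom_prime // addn1.
Qed.

(** * Divisibility among the numbers b^n - 1 and b^n + 1 *)

Lemma pow3_gt1 n : 0 < n -> 1 < 3 ^ n.
Proof. by move=> n_gt0; apply: leq_ltn_trans n_gt0 (ltn_expl n _). Qed.

Lemma leq_pow3_pred n : n <= 3 ^ n.-1.
Proof. by case: n => // n; apply: ltn_expl. Qed.

Lemma predn_expD b m n : 0 < b ->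
  (b ^ (m + n)).-1 = b ^ m * (b ^ n).-1 + (b ^ m).-1.
Proof.
move=> b_gt0; rewrite expnD.
have := expn_gt0 b m; have := expn_gt0 b n; rewrite b_gt0 /=.
move: (b ^ m) (b ^ n) => [|x] // [|y] // _ _; rewrite mulnS /=; lia.
Qed.

Lemma gcdn_predX b m n : 0 < b -> gcdn (b ^ m).-1 (b ^ n).-1 = (b ^ gcdn m n).-1.
Proof.
move=> b_gt0; have [s] := ubnP (m + n); elim: s m n => // s IH m n.
wlog le_nm : m n / n <= m => [W | mn_lt].
  by case: (leqP n m) => [/W // | /ltnW/W]; rewrite addnC gcdnC [gcdn m n]gcdnC; apply.
case: n le_nm mn_lt => [|n] le_nm mn_lt; first by rewrite expn0 !gcdn0.
rewrite -(subnK le_nm) predn_expD // gcdnC gcdnMDl [gcdn (_ + _) _]gcdnC gcdnDr.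
by rewrite IH //; lia.
Qed.

Lemma dvdn_predX b m n : m %| n -> (b ^ m).-1 %| (b ^ n).-1.
Proof. by case/dvdnP=> c ->; rewrite mulnC expnM dvdn_pred_predX. Qed.

Lemma dvdn_gcd_predX b r m n : 0 < b ->
  r %| (b ^ m).-1 -> r %| (b ^ n).-1 -> r %| (b ^ gcdn m n).-1.
Proof. by move=> b_gt0 r_m r_n; rewrite -gcdn_predX // dvdn_gcd r_m r_n. Qed.

Lemma predn_sqr x : (x ^ 2).-1 = x.-1 * x.+1.
Proof. by case: x => [|x] //; rewrite !expnS expn0 /=; nia. Qed.

Lemma dvdn_succX_predX2 x n : x ^ n + 1 %| (x ^ (2 * n)).-1.
Proof. by rewrite mulnC expnM predn_sqr addn1 dvdn_mull. Qed.

Lemma dvdn_succX_odd x n : odd n -> x.+1 %| x ^ n + 1.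
Proof.
move=> n_odd; case: x => [|x]; first by rewrite dvd1n.
have sq_pred : x.+2 %| ((x.+1 ^ 2) ^ n./2).-1.
  by apply: dvdn_trans (dvdn_pred_predX _ _); rewrite predn_sqr dvdn_mull.
have y_gt0 : 0 < (x.+1 ^ 2) ^ n./2 by rewrite !expn_gt0.
rewrite -(odd_double_half n) n_odd add1n -mul2n expnS expnM.
move: sq_pred y_gt0 => /dvdnP[c cE]; move: ((x.+1 ^ 2) ^ n./2) cE => y cE y_gt0.
by apply/dvdnP; exists (c * x.+1 + 1); nia.
Qed.

Lemma dvdn_succ_pred2 d x : 0 < x -> d %| x + 1 -> d %| x.-1 -> d %| 2.
Proof.
move=> x_gt0 d_succ d_pred; have := dvdn_sub d_succ d_pred.
by rewrite (_ : x + 1 - x.-1 = 2) //; lia.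
Qed.

Lemma odd_prime_ndvd2 r : prime r -> odd r -> ~~ (r %| 2).
Proof. by move=> r_pr r_odd; rewrite dvdn_prime2 //; apply: contraL r_odd => /eqP->. Qed.

Lemma fermat_predX a p : prime p -> 0 < a -> (a ^ p).-1 = a.-1 %[mod p].
Proof.
move=> p_pr a_gt0; apply/eqP; rewrite -(eqn_modDr 1) !addn1 !prednK ?expn_gt0 ?a_gt0 //.
exact/eqP/fermat_little.
Qed.

Lemma fermat_pred a p : prime p -> ~~ (p %| a) -> p %| (a ^ p.-1).-1.
Proof.
move=> p_pr p_a; have a_gt0 : 0 < a by case: a p_a; rewrite ?dvdn0.
have p_gt0 := prime_gt0 p_pr.
rewrite -(@Gauss_dvdr p a) ?prime_coprime //.
have -> : a * (a ^ p.-1).-1 = a ^ p - a.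
  by rewrite -subn1 mulnBr muln1 -expnS prednK.
by rewrite -eqn_mod_dvd ?fermat_little // -{1}(expn1 a) leq_pexp2l.
Qed.

(** * Prime divisors of the orders of small Ree groups *)

Lemma ree_order_gt0 b : 0 < b -> 0 < ree_order (3 ^ b).
Proof.
move=> b_gt0; rewrite /ree_order !muln_gt0 !expn_gt0 addn1 andbT /= subn_gt0.
exact: pow3_gt1.
Qed.

Lemma prime_dvd_ree_order r b : prime r -> r %| ree_order (3 ^ b) ->
  [\/ r = 3, r %| (3 ^ b).-1 | r %| 3 ^ (3 * b) + 1].
Proof.
move=> r_pr; rewrite /ree_order Euclid_dvdM // Euclid_dvdM // Euclid_dvdX // Euclid_dvdX //.
rewrite subn1 -expnM (mulnC b 3).
case/orP => [/orP[/andP[/andP[r_3 _] _] | r_pred] | r_succ].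
- by constructor 1; apply/eqP; rewrite -(dvdn_prime2 r_pr (isT : prime 3)).
- by constructor 2.
- by constructor 3.
Qed.

Lemma dvdn_ree_order_predX r b : r %| (3 ^ b).-1 -> r %| ree_order (3 ^ b).
Proof. by move=> r_b; rewrite /ree_order subn1 dvdn_mulr // dvdn_mull. Qed.

Lemma dvdn_ree_order_succX r b : r %| 3 ^ (3 * b) + 1 -> r %| ree_order (3 ^ b).
Proof. by move=> r_b; rewrite /ree_order -expnM (mulnC b 3) dvdn_mull. Qed.

Lemma two_dvd_ree_order b : 2 %| ree_order (3 ^ b).
Proof. exact/dvdn_ree_order_predX/dvdn_pred_predX. Qed.

Lemma three_dvd_ree_order b : 0 < b -> 3 %| ree_order (3 ^ b).
Proof.
by case: b => // b _; rewrite /ree_order -mulnA dvdn_mulr // dvdn_exp // expnS dvdn_mulr.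
Qed.

Lemma seven_dvd_ree_order b : odd b -> 7 %| ree_order (3 ^ b).
Proof.
move=> b_odd; apply: dvdn_ree_order_succX; rewrite expnM.
exact: dvdn_trans (dvdn_succX_odd 27 b_odd).
Qed.

Lemma dvdn_ree_order_pred6 r b : prime r -> r != 3 -> r %| ree_order (3 ^ b) ->
  r %| (3 ^ (6 * b)).-1.
Proof.
move=> r_pr r_neq3 /(prime_dvd_ree_order r_pr)[r3 | r_pred | r_succ].
- by rewrite r3 eqxx in r_neq3.
- by apply: dvdn_trans r_pred (dvdn_predX _ (dvdn_mull _ (dvdnn b))).
- by rewrite -[6 * b](mulnA 2 3 b); apply: dvdn_trans r_succ (dvdn_succX_predX2 _ _).
Qed.

Lemma prime_dvd_728 r : prime r -> r %| (3 ^ 6).-1 -> r \in [:: 2; 7; 13].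
Proof.
move=> r_pr r_728; have : r \in primes 728 by rewrite mem_primes r_pr.
by rewrite (_ : primes 728 = [:: 2; 7; 13]).
Qed.

Lemma thirteen_ndvd_ree_order b : ~~ (3 %| b) -> ~~ (13 %| ree_order (3 ^ b)).
Proof.
move=> b3; have b3_coprime : coprime b 3 by rewrite coprime_sym prime_coprime.
apply/negP => /(prime_dvd_ree_order (isT : prime 13))[] // r_b.
  have := dvdn_gcd_predX (isT : 0 < 3) r_b (isT : 13 %| (3 ^ 3).-1).
  by rewrite (eqP b3_coprime).
have r_pred : 13 %| (3 ^ (3 * b)).-1.
  exact: dvdn_trans (dvdn_predX _ (dvdn_mulr b (dvdnn 3))).
have q_gt0 : 0 < 3 ^ (3 * b) by rewrite expn_gt0.
by have := dvdn_succ_pred2 q_gt0 r_b r_pred.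
Qed.

Lemma primes_ree_order_common a b r : coprime a b -> odd a -> odd b -> ~~ (3 %| b) ->
  (r \in primes (ree_order (3 ^ a))) && (r \in primes (ree_order (3 ^ b)))
  = (r \in [:: 2; 3; 7]).
Proof.
move=> ab_coprime a_odd b_odd b3.
have [a_gt0 b_gt0] := (odd_gt0 a_odd, odd_gt0 b_odd).
rewrite !mem_primes !ree_order_gt0 //=; apply/idP/idP.
  case/andP=> /andP[r_pr r_a] /andP[_ r_b].
  have [-> // | r_neq3] := eqVneq r 3.
  have := dvdn_gcd_predX (isT : 0 < 3) (dvdn_ree_order_pred6 r_pr r_neq3 r_a)
    (dvdn_ree_order_pred6 r_pr r_neq3 r_b).
  rewrite -muln_gcdr (eqP ab_coprime) => /(prime_dvd_728 r_pr).
  rewrite !inE => /or3P[/eqP-> | /eqP-> | /eqP r13] //.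
  by rewrite r13 (negPf (thirteen_ndvd_ree_order b3)) in r_b.
rewrite !inE => /or3P[] /eqP->.
- by rewrite !two_dvd_ree_order.
- by rewrite !three_dvd_ree_order.
- by rewrite !seven_dvd_ree_order.
Qed.

Lemma prime_ndvd_ree_order p b : prime p -> 3 < p -> p != 7 ->
  coprime b p.-1 -> ~~ (3 %| b) -> ~~ (p %| ree_order (3 ^ b)).
Proof.
move=> p_pr p_gt3 p_neq7 bp_coprime b3; apply/negP => p_b.
have p_neq3 : p != 3 by rewrite neq_ltn p_gt3 orbT.
have p_fermat : p %| (3 ^ p.-1).-1 by apply: fermat_pred; rewrite // dvdn_prime2.
have := dvdn_gcd_predX (isT : 0 < 3) (dvdn_ree_order_pred6 p_pr p_neq3 p_b) p_fermat.
rewrite gcdnC Gauss_gcdl; last by rewrite coprime_sym.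
move/dvdn_trans/(_ (dvdn_predX 3 (dvdn_gcdr _ 6)))/(prime_dvd_728 p_pr).
rewrite !inE => /or3P[/eqP p2 | | /eqP p13].
- by rewrite p2 in p_gt3.
- by rewrite (negPf p_neq7).
- by rewrite p13 (negPf (thirteen_ndvd_ree_order b3)) in p_b.
Qed.

(** * The numbers q +- 1 and q +- sqrt(3q) + 1 *)

Lemma primes1_pfactor r n : primes n =i [:: r] -> n = r ^ logn r n.
Proof.
move=> n_r; have : r \in primes n by rewrite n_r mem_head.
rewrite mem_primes => /and3P[_ n_gt0 _]; have r_nat : r.-nat n.
  by rewrite /pnat n_gt0 /=; apply/allP => p; rewrite n_r inE.
by rewrite -p_part part_pnat_id.
Qed.

Lemma pow3_odd_mod8 p : odd p -> 3 ^ p = 3 %[mod 8].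
Proof.
move=> p_odd; rewrite -(odd_double_half p) p_odd add1n -mul2n expnS expnM.
by rewrite -modnMmr -modnXm (_ : 3 ^ 2 %% 8 = 1) // exp1n.
Qed.

Lemma primes_succ_pow3_neq2 p : odd p -> 1 < p -> ~ (primes (3 ^ p + 1) =i [:: 2]).
Proof.
move=> p_odd p_gt1 /primes1_pfactor; set e := logn 2 _ => qE.
have q_mod := pow3_odd_mod8 p_odd.
have q_ge27 : 3 ^ 3 <= 3 ^ p by rewrite leq_exp2l // odd_gt2.
have [e_ge3 | e_le2] := leqP 3 e.
  by have := dvdn_exp2l 2 e_ge3; rewrite -qE; move: q_mod q_ge27; lia.
have : 2 ^ e <= 2 ^ 2 by rewrite leq_exp2l.
by rewrite -qE; move: q_ge27; lia.
Qed.

Lemma primes_pred_pow3_neq2 p : odd p -> 1 < p -> ~ (primes (3 ^ p - 1) =i [:: 2]).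
Proof.
move=> p_odd p_gt1 /primes1_pfactor; set e := logn 2 _ => qE.
have q_mod := pow3_odd_mod8 p_odd.
have q_ge27 : 3 ^ 3 <= 3 ^ p by rewrite leq_exp2l // odd_gt2.
have [e_ge2 | e_le1] := leqP 2 e.
  by have := dvdn_exp2l 2 e_ge2; rewrite -qE; move: q_mod q_ge27; lia.
have : 2 ^ e <= 2 ^ 1 by rewrite leq_exp2l.
by rewrite -qE; move: q_ge27; lia.
Qed.

Lemma succ_cube_factor q s : s <= q -> s * s = 3 * q ->
  (q - s + 1) * (q + s + 1) * (q + 1) = q ^ 3 + 1.
Proof. by move=> s_le_q sq; rewrite -(subnK s_le_q) addnK in sq *; nia. Qed.

Lemma seven_dvd_succ_pow3_pm_sqrt p : odd p -> ~~ (3 %| p) ->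
  7 %| 3 ^ p - 3 ^ uphalf p + 1 \/ 7 %| 3 ^ p + 3 ^ uphalf p + 1.
Proof.
move=> p_odd p3; set q := 3 ^ p; set s := 3 ^ uphalf p.
have sq : s * s = 3 * q by rewrite -expnD addnn odd_uphalfK // -expnS.
have s_le_q : s <= q.
  by rewrite leq_exp2l //; have := odd_uphalfK p_odd; have := odd_gt0 p_odd; lia.
have seven_cube : 7 %| q ^ 3 + 1.
  by rewrite -expnM mulnC expnM (dvdn_trans _ (dvdn_succX_odd 27 p_odd)).
have seven_q : ~~ (7 %| q + 1).
  apply/negP => /dvdn_trans/(_ (dvdn_succX_predX2 3 p)) seven_2p.
  have := dvdn_gcd_predX (isT : 0 < 3) seven_2p (isT : 7 %| (3 ^ (2 * 3)).-1).
  have p3_coprime : coprime p 3 by rewrite coprime_sym prime_coprime.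
  by rewrite -muln_gcdr (eqP p3_coprime).
move: seven_cube; rewrite -(succ_cube_factor s_le_q sq) !Euclid_dvdM // (negPf seven_q).
by rewrite orbF => /orP.
Qed.

Lemma logn3_pred7X e : 0 < e -> logn 3 (7 ^ e).-1 = (logn 3 e).+1.
Proof. by move=> e_gt0; rewrite predn_exp_geom lognM ?geom_gt0 // logn_geom. Qed.

Lemma double_lt_pow3 t : 3 <= t -> t.*2 < 3 ^ t.-1.
Proof.
move/subnK <-; elim: (t - 3) => // u IH.
by rewrite !addn3 /= in IH *; rewrite expnS; lia.
Qed.

Lemma primes_succ_mul_pow3_neq7 t c : 3 <= t -> 0 < c < 3 ^ t ->
  ~ (primes (3 ^ t * c + 1) =i [:: 7]).
Proof.
move=> t_ge3 /andP[c_gt0 c_lt] /primes1_pfactor; move: (logn 7 _) => e nE.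
have n_le : 3 ^ t * c + 1 <= 9 ^ t by rewrite (_ : 9 = 3 * 3) // expnMn; nia.
have n_gt0 : 0 < 3 ^ t * c by rewrite muln_gt0 expn_gt0 c_gt0.
have pred7E : (7 ^ e).-1 = 3 ^ t * c by rewrite -nE addn1.
have e_gt0 : 0 < e by case: e nE {pred7E} => //; rewrite expn0; lia.
have : 3 ^ t %| (7 ^ e).-1 by rewrite pred7E dvdn_mulr.
rewrite pfactor_dvdn ?pred7E // -pred7E logn3_pred7X // => t_le.
have /(dvdn_leq e_gt0) e_ge : 3 ^ t.-1 %| e by rewrite pfactor_dvdn //; lia.
have : 9 ^ t < 7 ^ e.
  have -> : 9 ^ t = 3 ^ t.*2 by rewrite -mul2n expnM.
  apply: (@leq_trans (3 ^ e)); last by rewrite leq_exp2r.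
  by rewrite ltn_exp2l // (leq_trans (double_lt_pow3 t_ge3)).
by rewrite -nE ltnNge n_le.
Qed.

Lemma primes_succ_pow3_pm_sqrt_neq7 p : odd p -> 5 <= p ->
  ~ (primes (3 ^ p + 3 ^ uphalf p + 1) =i [:: 7]) /\
  ~ (primes (3 ^ p - 3 ^ uphalf p + 1) =i [:: 7]).
Proof.
move=> p_odd p_ge5; have := odd_uphalfK p_odd; set t := uphalf p => tE.
have t_ge3 : 3 <= t by lia.
have pE : 3 ^ p = 3 ^ t * 3 ^ t.-1 by rewrite -expnD; congr (_ ^ _); lia.
have tE3 : 3 ^ t = 3 * 3 ^ t.-1 by rewrite -expnS prednK //; lia.
have A_ge9 : 9 <= 3 ^ t.-1 by rewrite (_ : 9 = 3 ^ 2) // leq_exp2l //; lia.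
rewrite pE -[X in _ + X + 1]muln1 -[X in _ - X + 1]muln1 -mulnDr -mulnBr.
by split; apply: primes_succ_mul_pow3_neq7; lia.
Qed.

(** * Primitive prime divisors of 3^n - 1 *)

Lemma odd_prime_dvd_predX3 m : odd m -> 1 < m ->
  exists2 r, prime r & odd r && (r %| (3 ^ m).-1).
Proof.
move=> m_odd m_gt1; have G_odd : odd (geom 3 m) by rewrite odd_geom.
have G_gt1 : 1 < geom 3 m.
  by apply: leq_trans (geom_ge 3 (ltnW m_gt1)); apply: pow3_gt1; lia.
exists (pdiv (geom 3 m)); first exact: pdiv_prime.
by rewrite (dvdn_odd (pdiv_dvd _)) // predn_exp_geom dvdn_mull // pdiv_dvd.
Qed.

Lemma odd_prime_dvd_ree_order m r b : odd m -> prime r -> odd r -> r %| (3 ^ m).-1 ->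
  prime b -> r %| ree_order (3 ^ b) -> (b %| m) && (r %| (3 ^ b).-1).
Proof.
move=> m_odd r_pr r_odd r_m b_pr; have r_ndvd2 := odd_prime_ndvd2 r_pr r_odd.
case/(prime_dvd_ree_order r_pr) => [r3 | r_b | r_b].
- rewrite r3 in r_m.
  have : 3 %| (3 ^ m).-1 + 1 by rewrite addn1 prednK ?expn_gt0 // dvdn_exp ?(odd_gt0 m_odd).
  by rewrite dvdn_addr.
- rewrite r_b andbT; apply: contraR r_ndvd2 => b_m.
  have bm_coprime : coprime b m by rewrite prime_coprime.
  by have := dvdn_gcd_predX (isT : 0 < 3) r_b r_m; rewrite (eqP bm_coprime).
- have r_pred : r %| (3 ^ (2 * (3 * b))).-1.
    exact: dvdn_trans r_b (dvdn_succX_predX2 _ _).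
  have := dvdn_gcd_predX (isT : 0 < 3) r_pred r_m.
  rewrite gcdnC mulnC Gauss_gcdl ?coprimen2 //.
  move/dvdn_trans/(_ (dvdn_predX 3 (dvdn_gcdr _ _))).
  have q_gt0 : 0 < 3 ^ (3 * b) by rewrite expn_gt0.
  by move/(dvdn_succ_pred2 q_gt0 r_b); rewrite (negPf r_ndvd2).
Qed.

Lemma primitive_prime_predX_sqr p : prime p -> odd p ->
  exists2 r, prime r & [&& odd r, r %| (3 ^ (p * p)).-1 & ~~ (r %| (3 ^ p).-1)].
Proof.
move=> p_pr p_odd; have p_gt1 := prime_gt1 p_pr; set x := 3 ^ p.
have x_gt1 : 1 < x by rewrite pow3_gt1 // ltnW.
have C_odd : odd (geom x p) by rewrite odd_geom // oddX orbT.
have C_gt1 : 1 < geom x p.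
  by rewrite (leq_trans _ (geom_ge x (ltnW p_gt1))) // -(exp1n p.-1) ltn_exp2r //; lia.
have r_pr := pdiv_prime C_gt1; have r_C := pdiv_dvd (geom x p).
exists (pdiv (geom x p)) => //.
rewrite (dvdn_odd r_C) // expnM predn_exp_geom dvdn_mull //=.
apply/negP => r_x; move: r_C; rewrite dvdn_geom ?expn_gt0 // dvdn_prime2 // => /eqP r_p.
move: r_x; rewrite r_p /dvdn fermat_predX // -/(dvdn p 2).
by rewrite (negPf (odd_prime_ndvd2 p_pr p_odd)).
Qed.

Lemma geom_dvdn_of_nonprimitive p p' : prime p -> prime p' -> odd p' ->
  {in primes (geom (3 ^ p) p'), forall r, (r %| (3 ^ p).-1) || (r %| (3 ^ p').-1)} ->
  geom (3 ^ p) p' %| p * p' * (3 ^ p').-1.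
Proof.
move=> p_pr p'_pr p'_odd nonprim.
have [p_gt0 p'_gt0] := (prime_gt0 p_pr, prime_gt0 p'_pr).
set x := 3 ^ p; set z := 3 ^ p'; set C := geom x p'.
have [x_gt1 z_gt1] : 1 < x /\ 1 < z by rewrite !pow3_gt1.
have [x_pred_gt0 z_pred_gt0] : 0 < x.-1 /\ 0 < z.-1 by split; lia.
have C_gt0 : 0 < C := geom_gt0 x p'_gt0.
have C_odd : odd C by rewrite odd_geom // oddX orbT.
apply/dvdn_partP => // r r_in; have := nonprim r r_in.
move: r_in; rewrite mem_primes => /and3P[r_pr _ r_C]; have r_odd := dvdn_odd r_C C_odd.
rewrite p_part pfactor_dvdn ?muln_gt0 ?p_gt0 ?p'_gt0 // !lognM ?muln_gt0 ?p_gt0 //.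
case/orP => [r_x | r_z]; first by rewrite logn_geom //; lia.
have : logn r (x.-1 * C) = logn r z.-1 + logn r p.
  by rewrite -predn_exp_geom -expnM mulnC expnM predn_exp_geom lognM ?geom_gt0 // logn_geom.
by rewrite lognM //; lia.
Qed.

Lemma mul_pred_pow3_lt_geom p p' : 3 <= p -> 3 <= p' -> 6 < p + p' ->
  p * p' * (3 ^ p').-1 < geom (3 ^ p) p'.
Proof.
move=> p_ge3 p'_ge3 pp'_gt6.
apply: leq_trans (geom_ge _ (ltnW (ltnW p'_ge3))); rewrite -expnM.
have exp_le : 3 ^ p.-1 * 3 ^ p'.-1 * 3 ^ p' <= 3 ^ (p * p'.-1).
  by rewrite -!expnD leq_exp2l //; nia.
apply: leq_ltn_trans (_ : _ <= 3 ^ p.-1 * 3 ^ p'.-1 * (3 ^ p').-1) _.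
  by rewrite leq_mul2r leq_mul ?leq_pow3_pred ?orbT.
apply: leq_trans exp_le; rewrite ltn_pmul2l ?muln_gt0 ?expn_gt0 //.
by rewrite prednK ?expn_gt0.
Qed.

Lemma primitive_prime_predX_mul p p' : prime p -> prime p' -> odd p -> odd p' -> p != p' ->
  exists2 r, prime r &
    [&& odd r, r %| (3 ^ (p * p')).-1, ~~ (r %| (3 ^ p).-1) & ~~ (r %| (3 ^ p').-1)].
Proof.
move=> p_pr p'_pr p_odd p'_odd pp'_neq; set C := geom (3 ^ p) p'.
have C_odd : odd C by rewrite odd_geom // oddX orbT.
have [/hasP[r r_in /andP[r_p r_p']] | /hasPn nonprim] :=
  boolP (has (fun r => ~~ (r %| (3 ^ p).-1) && ~~ (r %| (3 ^ p').-1)) (primes C)).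
  move: r_in; rewrite mem_primes => /and3P[r_pr _ r_C]; exists r => //.
  by rewrite (dvdn_odd r_C) // expnM predn_exp_geom dvdn_mull // r_p r_p'.
have C_dvd : C %| p * p' * (3 ^ p').-1.
  by apply: geom_dvdn_of_nonprimitive => // r /nonprim; rewrite negb_and !negbK.
have [p_gt2 p'_gt2] := (odd_prime_gt2 p_odd p_pr, odd_prime_gt2 p'_odd p'_pr).
have : p * p' * (3 ^ p').-1 < C by apply: mul_pred_pow3_lt_geom => //; lia.
have z_pred_gt0 : 0 < (3 ^ p').-1 by have := pow3_gt1 (prime_gt0 p'_pr); lia.
by rewrite ltnNge dvdn_leq // !muln_gt0 z_pred_gt0 !prime_gt0.
Qed.

Lemma primitive_prime_predX p p' : prime p -> prime p' -> odd p -> odd p' ->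
  exists2 r, prime r &
    [&& odd r, r %| (3 ^ (p * p')).-1, ~~ (r %| (3 ^ p).-1) & ~~ (r %| (3 ^ p').-1)].
Proof.
move=> p_pr p'_pr p_odd p'_odd; have [<- | ] := eqVneq p p'; last first.
  exact: primitive_prime_predX_mul.
have [r r_pr /and3P[r_odd r_pp r_p]] := primitive_prime_predX_sqr p_pr p_odd.
by exists r; rewrite ?r_odd ?r_pp ?r_p.
Qed.

Lemma mem_of_ree_order_cover m (P : seq nat) : 3 < m -> odd m -> all prime P ->
  (forall r, prime r -> r %| (3 ^ m).-1 -> has (fun b => r %| ree_order (3 ^ b)) P) ->
  m \in P.
Proof.
move=> m_gt3 m_odd P_prime cover.
have covered r m' : prime r -> odd r -> m' %| m -> r %| (3 ^ m').-1 ->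
    exists2 b, b \in P & (b %| m') && (r %| (3 ^ b).-1).
  move=> r_pr r_odd m'_m r_m'; have m'_odd := dvdn_odd m'_m m_odd.
  have /hasP[b b_P r_b] := cover r r_pr (dvdn_trans r_m' (dvdn_predX 3 m'_m)).
  by exists b; last exact: odd_prime_dvd_ree_order (allP P_prime b b_P) r_b.
have [m_pr | m_npr] := boolP (prime m).
  have [r r_pr /andP[r_odd r_m]] := odd_prime_dvd_predX3 m_odd (ltnW (ltnW m_gt3)).
  have [b b_P /andP[b_m _]] := covered r m r_pr r_odd (dvdnn m) r_m.
  by move: b_m; rewrite dvdn_prime2 ?(allP P_prime b b_P) // => /eqP <-.
set p := pdiv m; have p_pr : prime p by rewrite pdiv_prime //; lia.
have [c mE] : exists c, m = c * p by exists (m %/ p); rewrite divnK // pdiv_dvd.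
have c_gt1 : 1 < c.
  case: c mE => [|[|c]] // mE; first by rewrite mE in m_gt3.
  by rewrite mE mul1n p_pr in m_npr.
set p' := pdiv c; have p'_pr : prime p' := pdiv_prime c_gt1.
have pp'_m : p * p' %| m by rewrite mE mulnC dvdn_mul // pdiv_dvd.
have p_odd : odd p := dvdn_odd (dvdn_mulr _ (dvdnn p)) (dvdn_odd pp'_m m_odd).
have p'_odd : odd p' := dvdn_odd (dvdn_mull _ (dvdnn p')) (dvdn_odd pp'_m m_odd).
have [r r_pr /and4P[r_odd r_pp' r_p r_p']] := primitive_prime_predX p_pr p'_pr p_odd p'_odd.
have [b b_P /andP[b_pp' r_b]] := covered r (p * p') r_pr r_odd pp'_m r_pp'.
have b_pr := allP P_prime b b_P.
move: b_pp'; rewrite Euclid_dvdM // !dvdn_prime2 // => /orP[] /eqP b_eq.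
  by rewrite -b_eq r_b in r_p.
by rewrite -b_eq r_b in r_p'.
Qed.

(** * The primes p_i *)

Lemma pdiv_fact_gt n : n < pdiv n`!.+1.
Proof.
have p_pr : prime (pdiv n`!.+1) by rewrite pdiv_prime // ltnS fact_gt0.
rewrite ltnNge; apply/negP => p_le_n.
have : pdiv n`!.+1 %| n`! + 1 by rewrite addn1 pdiv_dvd.
rewrite dvdn_addr ?dvdn_fact ?(prime_gt0 p_pr) // dvdn1 => /eqP p1.
by rewrite p1 in p_pr.
Qed.

Lemma next_pP s : all (fun p => 0 < p) s ->
  [/\ prime (next_p s), last 5 s < next_p s &
      {in s, forall p, ~~ (next_p s %| ree_order (3 ^ p))}].
Proof.
move=> s_pos; rewrite /next_p; set l := last 5 s.
set B := l + \prod_(p <- s) ree_order (3 ^ p); set x0 := pdiv B`!.+1.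
have ree_le_B p : p \in s -> ree_order (3 ^ p) <= B.
  move=> p_s; apply: leq_trans (leq_addl l _); apply: dvdn_leq; last first.
    by rewrite (big_rem p p_s) /= dvdn_mulr.
  by rewrite big_seq prodn_cond_gt0 // => q /(allP s_pos) /ree_order_gt0.
have B_lt_x0 : B < x0 := pdiv_fact_gt B.
have x0_ndvd : all (fun p => ~~ (x0 %| ree_order (3 ^ p))) s.
  apply/allP => p p_s; rewrite gtnNdvd ?ree_order_gt0 ?(allP s_pos) //.
  exact: leq_ltn_trans (ree_le_B p p_s) B_lt_x0.
have x0_in : x0 \in [seq x <- iota l.+1 B`!.+1 | prime x &&
                     all (fun p => ~~ (x %| ree_order (3 ^ p))) s].
  have [l_le_B x0_le] : l <= B /\ x0 <= B`!.+1 by rewrite leq_addr pdiv_leq.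
  by rewrite mem_filter pdiv_prime ?ltnS ?fact_gt0 // x0_ndvd mem_iota /=; lia.
case E : [seq x <- _ | _] x0_in => [|y t] // _.
have : y \in [seq x <- iota l.+1 B`!.+1 | prime x &&
                all (fun p => ~~ (x %| ree_order (3 ^ p))) s] by rewrite E mem_head.
rewrite mem_filter mem_iota /= => /andP[/andP[y_pr /allP y_ndvd] /andP[l_lt_y _]].
by split.
Qed.

Lemma reePSS n : reeP n.+2 = next_p (ree_primes n).
Proof. by rewrite /reeP /= last_rcons. Qed.

Lemma ree_primesE n : ree_primes n = [seq reeP j | j <- iota 1 n.+1].
Proof.
elim: n => // n IH.
by rewrite [LHS]/= -[n.+2]addn1 iotaD map_cat -IH add1n -reePSS cats1.
Qed.

Lemma ree_primes_prime n : all prime (ree_primes n).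
Proof.
elim: n => // n IH; rewrite /= all_rcons IH andbT.
by case: (next_pP (sub_all (fun p => @prime_gt0 p) IH)).
Qed.

Lemma reeP_prime i : prime (reeP i).
Proof.
rewrite /reeP; have := mem_last 5 (ree_primes i.-1); rewrite inE.
by case/orP => [/eqP-> // | /(allP (ree_primes_prime _))].
Qed.

Lemma reeP_next n : reeP n.+1 < reeP n.+2 /\
  forall j, 0 < j <= n.+1 -> ~~ (reeP n.+2 %| ree_order (3 ^ reeP j)).
Proof.
have s_pos := sub_all (fun p => @prime_gt0 p) (ree_primes_prime n).
have [_ lt_next ndvd_next] := next_pP s_pos; rewrite reePSS; split => // j j_range.
by apply: ndvd_next; rewrite ree_primesE map_f // mem_iota; lia.
Qed.

Lemma reeP_lt : {in [pred k | 0 < k] &, {homo reeP : i j / i < j}}.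
Proof.
apply: homo_ltn_in => [y x z | i j | [|i] //= _ _]; first exact: ltn_trans.
  by rewrite !inE => i_gt0 _ k /andP[/(ltn_trans i_gt0)].
by case: (reeP_next i).
Qed.

Lemma reeP1 : reeP 1 = 5.
Proof. by []. Qed.

Lemma reeP_ge5 i : 5 <= reeP i.
Proof. by case: i => [|[|i]] //; rewrite -reeP1 ltnW // reeP_lt. Qed.

Lemma reeP_odd i : odd (reeP i).
Proof.
have [p2 | //] := even_prime (reeP_prime i).
by have := reeP_ge5 i; rewrite p2.
Qed.

Lemma reeP_ndvd3 i : ~~ (3 %| reeP i).
Proof.
rewrite dvdn_prime2 ?reeP_prime //; apply/negP => /eqP p3.
by have := reeP_ge5 i; rewrite -p3.
Qed.

Lemma reeP_neq7 i : reeP i != 7.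
Proof.
case: i => [|[|i]] //; apply/negP => /eqP p7; have [_ ndvd] := reeP_next i.
by have := ndvd 1 isT; rewrite p7 reeP1 seven_dvd_ree_order.
Qed.

Lemma reeP_leq i j : 0 < i <= j -> reeP i <= reeP j.
Proof.
case/andP=> i_gt0; rewrite leq_eqVlt => /orP[/eqP-> // | ij].
exact/ltnW/reeP_lt/ij/(ltn_trans i_gt0 ij).
Qed.

Lemma reeP_coprime i j : 0 < i -> 0 < j -> i != j -> coprime (reeP i) (reeP j).
Proof.
move=> i_gt0 j_gt0 ij; rewrite prime_coprime ?reeP_prime // dvdn_prime2 ?reeP_prime //.
apply/negP => /eqP p_eq; case: (ltngtP i j) ij => [i_lt_j | j_lt_i |] // _.
  by have := reeP_lt i_gt0 j_gt0 i_lt_j; rewrite p_eq ltnn.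
by have := reeP_lt j_gt0 i_gt0 j_lt_i; rewrite p_eq ltnn.
Qed.

Lemma reeP_ndvd_ree_order i j : 0 < i -> 0 < j -> ~~ (reeP i %| ree_order (3 ^ reeP j)).
Proof.
move=> i_gt0 j_gt0; have [ji | ij] := ltnP j i.
  case: i i_gt0 ji => [|[|i]] // _ ji; first by rewrite ltnNge j_gt0 in ji.
  by case: (reeP_next i) => _; apply; rewrite j_gt0.
have p_le := reeP_leq (introT andP (conj i_gt0 ij)).
apply: prime_ndvd_ree_order; rewrite ?reeP_prime ?reeP_neq7 ?reeP_ndvd3 //.
  exact: leq_trans (reeP_ge5 i).
rewrite prime_coprime ?reeP_prime // gtnNdvd //; have := reeP_ge5 i; lia.
Qed.

Theorem lemma2p1 :
  (forall i : nat, 0 < i ->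
     (* (a) *)
     (forall j : nat, 0 < j -> j != i ->
        forall r : nat,
          (r \in primes (ree_order (reeQ i))) && (r \in primes (ree_order (reeQ j)))
          = (r \in [:: 2; 3; 7]))
     (* (b) *)
  /\ (forall j : nat, 0 < j ->
        reeP i \notin primes (ree_order (reeQ j))
        /\ 5 \notin primes (ree_order (reeQ j)))
     (* (c) *)
  /\ ~ (primes (reeQ i + 1) =i [:: 2])
  /\ ~ (primes (reeQ i - 1) =i [:: 2])
  /\ (7 %| reeQ i - reeS i + 1 \/ 7 %| reeQ i + reeS i + 1)
  /\ ~ (primes (reeQ i + reeS i + 1) =i [:: 7])
  /\ ~ (primes (reeQ i - reeS i + 1) =i [:: 7]))
  (* (d) *)
  /\ (forall k m : nat, 0 < k -> 3 < m -> odd m ->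
        (forall r : nat, r \in primes (ree_order (3 ^ m)) ->
           r \in primes (\prod_(1 <= j < k.+1) ree_order (reeQ j))) ->
        exists2 j : nat, 1 <= j <= k & m = reeP j).
Proof.
split=> [i i_gt0 | k m _ m_gt3 m_odd cover].
  have p_gt1 := prime_gt1 (reeP_prime i); have p_odd := reeP_odd i.
  have [succ_neq7 pred_neq7] := primes_succ_pow3_pm_sqrt_neq7 p_odd (reeP_ge5 i).
  rewrite /reeQ /reeS; split.
    move=> j j_gt0 ji r; apply: primes_ree_order_common; rewrite ?reeP_odd ?reeP_ndvd3 //.
    by apply: reeP_coprime; rewrite // eq_sym.
  split.
    move=> j j_gt0; rewrite !mem_primes !negb_and -{2}reeP1.
    by rewrite !reeP_ndvd_ree_order ?orbT.
  split; first exact: primes_succ_pow3_neq2.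
  split; first exact: primes_pred_pow3_neq2.
  split; first exact: seven_dvd_succ_pow3_pm_sqrt (reeP_ndvd3 i).
  by split.
have /mapP[j] : m \in [seq reeP j | j <- index_iota 1 k.+1].
  apply: mem_of_ree_order_cover => //.
    by apply/allP => _ /mapP[j _ ->]; apply: reeP_prime.
  move=> r r_pr r_m; rewrite has_map -big_has -Euclid_dvd_prod //.
  have r_in : r \in primes (ree_order (3 ^ m)).
    by rewrite mem_primes r_pr ree_order_gt0 ?dvdn_ree_order_predX //; lia.
  by move: (cover r r_in); rewrite mem_primes => /and3P[].
by rewrite mem_index_iota => j_range ->; exists j.
Qed.
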